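(* For every NFA $\mathcal A$, the relation $P(\subseteq^{\mathrm{bw}},\sqsubset^{\mathrm{di}})$ is good for pruning on NFA: $\mathcal L(\mathrm{Prune}(\mathcal A,P(\subseteq^{\mathrm{bw}},\sqsubset^{\mathrm{di}})))=\mathcal L(\mathcal A)$.
   Context: An NFA is $\mathcal A=(\Sigma,Q,I,F,\delta)$, $\delta\subseteq Q\times\Sigma\times Q$, assumed forward and backward complete; its language is the set of finite words having a finite trace starting in $I$ and ending in $F$. Direct simulation $\sqsubseteq^{\mathrm{di}}$: in the game from $(p_0,q_0)$, at round $i$ from $(p_i,q_i)$ Spoiler picks $p_i\xrightarrow{\sigma_i}p_{i+1}$, Duplicator answers $q_i\xrightarrow{\sigma_i}q_{i+1}$; Duplicator wins the infinite play if $p_i\in F\Rightarrow q_i\in F$ for all $i$; $p\sqsubseteq^{\mathrm{di}}q$ iff she has a winning strategy from $(p,q)$; $\sqsubset^{\mathrm{di}}$ is its strict part. Backward finite trace inclusion: $p\subseteq^{\mathrm{bw}}q$ iff for every finite word $w$, if some $w$-trace starting in $I$ ends in $p$, then some $w$-trace starting in $I$ ends in $q$. $\mathrm{Prune}(\mathcal A,P)$ has transition set $\{t\in\delta:\nexists t'\in\delta,(t,t')\in P\}$; $P(R_b,R_f)=\{((p,\sigma,r),(p',\sigma,r'))\in\delta\times\delta:p\,R_b\,p',\ r\,R_f\,r'\}$. *)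

From mathcomp Require Import all_boot.
Set Implicit Arguments. Unset Strict Implicit. Unset Printing Implicit Defensive.

Record nfa (Sigma Q : finType) := NFA {
  init : Q -> Prop;
  final : Q -> Prop;
  trans : Q -> Sigma -> Q -> Prop }.

Section NFA.
Variables (Sigma Q : finType).
Implicit Types (A : nfa Sigma Q).

Definition fw_complete A := forall (p : Q) (a : Sigma), exists r, trans A p a r.
Definition bw_complete A := forall (r : Q) (a : Sigma), exists p, trans A p a r.

Fixpoint trace A (q : Q) (w : seq Sigma) (p : Q) : Prop :=
  match w with
  | [::] => q = p
  | a :: w' => exists r, trans A q a r /\ trace A r w' p
  end.

Definition lang A (w : seq Sigma) : Prop :=
  exists i f, init A i /\ final A f /\ trace A i w f.

(* Direct simulation game.  A Duplicator strategy maps the history of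
   Spoiler's moves (sigma_0,p_1),...,(sigma_i,p_{i+1}) to q_{i+1}.
   A Spoiler play is an infinite sequence of transitions from p. *)
Definition history (sg : nat -> Sigma) (ps : nat -> Q) (n : nat) :
  seq (Sigma * Q) := [seq (sg k, ps k.+1) | k <- iota 0 n].

Definition dup_play (q : Q) (f : seq (Sigma * Q) -> Q)
  (sg : nat -> Sigma) (ps : nat -> Q) (i : nat) : Q :=
  match i with 0 => q | j.+1 => f (history sg ps j.+1) end.

Definition dsim A (p q : Q) : Prop :=
  exists f : seq (Sigma * Q) -> Q,
    forall (sg : nat -> Sigma) (ps : nat -> Q),
      ps 0 = p ->
      (forall i, trans A (ps i) (sg i) (ps i.+1)) ->
      forall i,
        trans A (dup_play q f sg ps i) (sg i) (dup_play q f sg ps i.+1) /\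
        (final A (ps i) -> final A (dup_play q f sg ps i)).

Definition dsim_strict A (p q : Q) : Prop := dsim A p q /\ ~ dsim A q p.

Definition bw_incl A (p q : Q) : Prop :=
  forall w : seq Sigma,
    (exists i, init A i /\ trace A i w p) ->
    (exists i, init A i /\ trace A i w q).

Definition Prel A (Rb Rf : Q -> Q -> Prop) (t t' : Q * Sigma * Q) : Prop :=
  let: (p, a, r) := t in let: (p', a', r') := t' in
  [/\ trans A p a r, trans A p' a' r', a = a', Rb p p' & Rf r r'].

Definition prune A (P : Q * Sigma * Q -> Q * Sigma * Q -> Prop) : nfa Sigma Q :=
  NFA (init A) (final A)
    (fun p a r => trans A p a r /\
       ~ exists t' : Q * Sigma * Q,
           let: (p', a', r') := t' in trans A p' a' r' /\ P (p, a, r) t').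

End NFA.

From Stdlib Require Import ClassicalEpsilon Wf_nat.
From mathcomp Require Import all_boot.
Set Implicit Arguments. Unset Strict Implicit. Unset Printing Implicit Defensive.

(* Every state reachable in A on a word u is direct-simulated by a state
   reachable on u in the pruned automaton.  For the inductive step, a pruned
   simulator of the source of the last transition x -a-> y answers it by some
   transition xh -a-> y1 with y ⊑ y1.  If that transition was pruned, it is
   dominated by x' -a-> y' with xh ⊆bw x' (so x' is reachable on u) and
   y1 ⊏ y'; then y ⊏ y', and since strict simulation is well founded on the
   finite state space, this can only be repeated finitely often.  Direct
   simulation preserves finality, so accepting runs are not lost. *)

Section History.
Variables (Sigma Q : finType) (sg : nat -> Sigma) (ps : nat -> Q).

Lemma history_rcons n :
  history sg ps n.+1 = rcons (history sg ps n) (sg n, ps n.+1).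
Proof. by rewrite /history -addn1 iotaD map_cat /= cats1 add0n addn1. Qed.

Lemma history_cons n :
  history sg ps n.+1 =
  (sg 0, ps 1) :: history (fun k => sg k.+1) (fun k => ps k.+1) n.
Proof. by rewrite /history /= -[1]/(1 + 0) iotaDl -map_comp. Qed.

End History.

Section DirectSimulation.
Variables (Sigma Q : finType) (A : nfa Sigma Q).

Lemma dsim_refl p : dsim A p p.
Proof.
exists (fun h => last p [seq x.2 | x <- h]) => sg ps ps0 run.
have copy j : dup_play p (fun h => last p [seq x.2 | x <- h]) sg ps j = ps j.
  case: j => [|j]; first by rewrite /= ps0.
  by rewrite /dup_play history_rcons map_rcons last_rcons.
by move=> i; rewrite !copy.
Qed.

(* Replaces each state of Spoiler's history by the answer of the strategy f
   ([pre] is the part of the history already consumed): f's answers are the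
   Spoiler moves of the second game when composing two simulations. *)
Fixpoint answer_history (f : seq (Sigma * Q) -> Q) (pre h : seq (Sigma * Q)) :=
  if h is x :: h' then (x.1, f (rcons pre x)) :: answer_history f (rcons pre x) h'
  else [::].

Lemma answer_history_iota f sg ps n m :
  answer_history f (history sg ps m) [seq (sg k, ps k.+1) | k <- iota m n] =
  [seq (sg k, f (history sg ps k.+1)) | k <- iota m n].
Proof. by elim: n m => [|n IHn] m //=; rewrite -history_rcons IHn. Qed.

Lemma dsim_trans p q r : dsim A p q -> dsim A q r -> dsim A p r.
Proof.
move=> [f1 win1] [f2 win2].
exists (fun h => f2 (answer_history f1 [::] h)) => sg ps ps0 run.
set qs := dup_play q f1 sg ps.
have qrun i : trans A (qs i) (sg i) (qs i.+1) by case: (win1 sg ps ps0 run i).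
have composed i : dup_play r (fun h => f2 (answer_history f1 [::] h)) sg ps i
                  = dup_play r f2 sg qs i.
  by case: i => [|j] //=; congr f2; apply: (answer_history_iota f1 sg ps j.+1 0).
move=> i; rewrite !composed; have [step2 fin2] := win2 sg qs erefl qrun i.
by split=> // /(win1 sg ps ps0 run i).2.
Qed.

Lemma dsim_strict_trans x y z :
  dsim A x y -> dsim_strict A y z -> dsim_strict A x z.
Proof.
move=> xy [yz not_zy]; split; first exact: dsim_trans xy yz.
by move=> zx; apply: not_zy; apply: dsim_trans zx xy.
Qed.

Lemma dsim_strict_wf : well_founded (fun y x => dsim_strict A x y).
Proof.
pose above y z := if excluded_middle_informative (dsim_strict A y z)
                  then true else false.
have aboveP y z : above y z <-> dsim_strict A y z.
  by rewrite /above; case: excluded_middle_informative.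
apply: (well_founded_lt_compat _ (fun y => #|[pred z | above y z]|)) => y x xy.
apply/ltP/proper_card/properP; split.
  apply/subsetP => z; rewrite !inE => /aboveP yz; apply/aboveP.
  exact: dsim_strict_trans xy.1 yz.
exists y; rewrite !inE; first exact/aboveP.
by apply/negP => /aboveP [_]; apply; apply: dsim_refl.
Qed.

Hypothesis fwA : fw_complete A.

Lemma fw_complete_run a p :
  exists ps : nat -> Q, ps 0 = p /\ forall i, trans A (ps i) a (ps i.+1).
Proof.
pose next r := proj1_sig (constructive_indefinite_description _ (fwA r a)).
have nextP r : trans A r a (next r).
  exact: proj2_sig (constructive_indefinite_description _ (fwA r a)).
by exists (fun i => iter i next p); split=> // i; apply: nextP.
Qed.

Lemma dsim_final (a : Sigma) p q : dsim A p q -> final A p -> final A q.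
Proof.
move=> [f win]; have [ps [ps0 run]] := fw_complete_run a p.
by rewrite -{1}ps0; apply: (win (fun _ => a) ps ps0 run 0).2.
Qed.

Lemma dsim_step x xh a y : dsim A x xh -> trans A x a y ->
  exists2 y1, trans A xh a y1 & dsim A y y1.
Proof.
move=> [f win] xy; have [rs [rs0 rrun]] := fw_complete_run a y.
pose ps i := if i is k.+1 then rs k else x.
have run i : trans A (ps i) a (ps i.+1) by case: i => [|k] //=; rewrite rs0.
exists (f [:: (a, y)]).
  by have := (win (fun _ => a) ps erefl run 0).1; rewrite /= /history /= rs0.
exists (fun h => f ((a, y) :: h)) => sg' ps' ps'0 run'.
pose sg i := if i is k.+1 then sg' k else a.
pose qs i := if i is k.+1 then ps' k else x.
have qrun i : trans A (qs i) (sg i) (qs i.+1) by case: i => [|k] //=; rewrite ps'0.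
have shifted i : dup_play (f [:: (a, y)]) (fun h => f ((a, y) :: h)) sg' ps' i
                 = dup_play xh f sg qs i.+1.
  case: i => [|j] /=; first by rewrite /history /= ps'0.
  by rewrite [history sg qs j.+2]history_cons /= ps'0.
by move=> i; rewrite !shifted; apply: (win sg qs erefl qrun i.+1).
Qed.

End DirectSimulation.

Section Pruning.
Variables (Sigma Q : finType) (A : nfa Sigma Q).

Definition reach (B : nfa Sigma Q) (u : seq Sigma) (p : Q) :=
  exists i, init B i /\ trace B i u p.

Lemma trace_rcons (B : nfa Sigma Q) u a i p :
  trace B i (rcons u a) p <-> exists2 x, trace B i u x & trans B x a p.
Proof.
elim: u i => [|b u IHu] i /=.
  by split=> [[r [iar <-]]|[x <- xap]]; [exists i | exists p].
split=> [[r [ibr /IHu [x rx xap]]]|[x [r [ibr rx]] xap]].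
  by exists x => //; exists r.
by exists r; split=> //; apply/IHu; exists x.
Qed.

Lemma reach_rcons (B : nfa Sigma Q) u a p :
  reach B (rcons u a) p <-> exists2 x, reach B u x & trans B x a p.
Proof.
split=> [[i [Ii /trace_rcons [x ix xap]]]|[x [i [Ii ix]] xap]].
  by exists x => //; exists i.
by exists i; split=> //; apply/trace_rcons; exists x.
Qed.

Lemma trace_prune P u i p : trace (prune A P) i u p -> trace A i u p.
Proof.
elim: u i => [|b u IHu] i //= [r [[ibr _] rp]].
by exists r; split=> //; apply: IHu.
Qed.

Local Notation PA := (prune A (Prel A (bw_incl A) (dsim_strict A))).

Hypothesis fwA : fw_complete A.

Lemma reach_prune_rcons u a :
  (forall x, reach A u x -> exists2 x', reach PA u x' & dsim A x x') ->
  forall y, (exists2 x, reach A u x & trans A x a y) ->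
  exists2 y', reach PA (rcons u a) y' & dsim A y y'.
Proof.
move=> IHu y; elim/(well_founded_ind (dsim_strict_wf A)): y => y IHy [x ux xy].
have [xh [i [Ii ixh]] x_xh] := IHu x ux.
have [y1 xh_y1 y_y1] := dsim_step fwA x_xh xy.
case: (classic (exists t' : Q * Sigma * Q, let: (x', a', y') := t' in
          trans A x' a' y' /\
          Prel A (bw_incl A) (dsim_strict A) (xh, a, y1) t')) => [|kept].
  move=> [[[x' a'] y'] [x'y' [_ _ a_a' xh_bw_x' y1_y']]]; subst a'.
  have y_y' : dsim_strict A y y' by apply: dsim_strict_trans y_y1 y1_y'.
  have ux' : reach A u x'.
    by apply: xh_bw_x'; exists i; split=> //; apply: trace_prune ixh.
  have [yh uyh y'_yh] := IHy y' y_y' (ex_intro2 _ _ x' ux' x'y').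
  by exists yh => //; apply: dsim_trans y_y'.1 y'_yh.
by exists y1 => //; apply/reach_rcons; exists xh; [exists i | split].
Qed.

Lemma reach_prune_dsim u p : reach A u p -> exists2 p', reach PA u p' & dsim A p p'.
Proof.
elim/last_ind: u p => [|u a IHu] p.
  by move=> [i [Ii /= <-]]; exists i; [exists i | apply: dsim_refl].
by move=> /reach_rcons; apply: reach_prune_rcons.
Qed.

End Pruning.

Theorem theorem5p9 (Sigma Q : finType) (A : nfa Sigma Q) :
  fw_complete A -> bw_complete A ->
  forall w : seq Sigma,
    lang (prune A (Prel A (bw_incl A) (dsim_strict A))) w <-> lang A w.
Proof.
move=> fwA _ w; split=> [[i [f [Ii [Ff /trace_prune iwf]]]]|[i [f [Ii [Ff iwf]]]]].
  by exists i, f.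
case: w iwf => [|a w] iwf; first by exists i, f.
have [f' [j [Ij jwf']] f_f'] := reach_prune_dsim fwA (ex_intro _ i (conj Ii iwf)).
by exists j, f'; do !split=> //; have := dsim_final fwA a f_f' Ff.
Qed.
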